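(* Let $T_k$ be a tournament on $k$ vertices and let $n$ be a positive integer. If Breaker has a winning strategy in the $(2:1)$ Maker–Breaker game $\mathcal{H}(T_k,n)$, then OBreaker has a winning strategy in the orientation game $Or(T_k,n)$.
   Context: The game $\mathcal{H}(T_k,n)=(X,\mathcal{F}(T_k))$ has board $X=\{(u,v): u,v\in V(K_n),\ u\ne v\}$, the set of ordered pairs of distinct vertices. Its winning sets are $\mathcal{F}(T_k)=\{S\subseteq X: S \text{ is the arc set of a copy of } T_k\}$. The players alternately claim unclaimed elements, Maker claiming $2$ per round and Breaker $1$ per round. Maker wins if she claims all elements of some winning set. The orientation game $Or(T_k,n)$ is played on the edges of $K_n$ by OMaker (moving first) and OBreaker. They alternately choose a previously undirected edge and give it a direction. OMaker wins if the final digraph, containing both players' directed edges, contains a copy of $T_k$; otherwise OBreaker wins. *)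

From HB Require Import structures.
From mathcomp Require Import all_boot.
Set Implicit Arguments. Unset Strict Implicit. Unset Printing Implicit Defensive.

Definition tournament (k : nat) (T : rel 'I_k) : Prop :=
  (forall i, ~~ T i i) /\ (forall i j, i != j -> T i j = ~~ T j i).

Definition copy_arcs (k n : nat) (T : rel 'I_k) (f : 'I_k -> 'I_n)
  : {set 'I_n * 'I_n} :=
  [set (f p.1, f p.2) | p in [set p : 'I_k * 'I_k | T p.1 p.2]].

Definition contains_copy (k n : nat) (T : rel 'I_k) (D : {set 'I_n * 'I_n}) : Prop :=
  exists f : 'I_k -> 'I_n, injective f /\ forall i j, T i j -> (f i, f j) \in D.

(* A history is the sequence of moves played so far; move number i (from 0)
   is Maker's if i is even and Breaker's if i is odd. A move is the set of
   board elements claimed in that turn. *)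
Definition mset (X : finType) (h : seq {set X}) : {set X} :=
  \bigcup_(i < size h | ~~ odd i) nth set0 h i.
Definition bset (X : finType) (h : seq {set X}) : {set X} :=
  \bigcup_(i < size h | odd i) nth set0 h i.
Definition free (X : finType) (Bd : {set X}) (h : seq {set X}) : {set X} :=
  Bd :\: (mset h :|: bset h).

(* [MB_breaker_wins_from a b Bd W sigma h]: every play of the (a:b) game on
   board Bd with winning sets W which continues the history h and in which
   Breaker follows the (history-dependent) strategy sigma is legal for
   Breaker and ends with Breaker's win (Maker never claims all of some
   winning set). In each turn a player claims min(bias, #free) free elements;
   the game ends when the board is exhausted. *)
Inductive MB_breaker_wins_from (X : finType) (a b : nat) (Bd : {set X})
    (W : {set X} -> Prop) (sigma : seq {set X} -> {set X}) : seq {set X} -> Prop :=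
| MB_end h :
    free Bd h = set0 ->
    ~ (exists S, W S /\ S \subset mset h) ->
    MB_breaker_wins_from a b Bd W sigma h
| MB_maker_turn h :
    ~~ odd (size h) -> free Bd h != set0 ->
    (forall A : {set X}, A \subset free Bd h -> #|A| = minn a #|free Bd h| ->
       MB_breaker_wins_from a b Bd W sigma (rcons h A)) ->
    MB_breaker_wins_from a b Bd W sigma h
| MB_breaker_turn h :
    odd (size h) -> free Bd h != set0 ->
    sigma h \subset free Bd h -> #|sigma h| = minn b #|free Bd h| ->
    MB_breaker_wins_from a b Bd W sigma (rcons h (sigma h)) ->
    MB_breaker_wins_from a b Bd W sigma h.

Definition MB_breaker_has_winning_strategy (X : finType) (a b : nat)
    (Bd : {set X}) (W : {set X} -> Prop) : Prop :=
  exists sigma : seq {set X} -> {set X}, MB_breaker_wins_from a b Bd W sigma [::].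

Definition Hboard (n : nat) : {set 'I_n * 'I_n} := [set p | p.1 != p.2].

Definition HWin (k n : nat) (T : rel 'I_k) (S : {set 'I_n * 'I_n}) : Prop :=
  exists f : 'I_k -> 'I_n, injective f /\ S = copy_arcs T f.

(* A history is the sequence of arcs chosen so far (move i by OMaker if i is
   even, OBreaker if odd). Choosing the arc (u,v) = directing the edge uv
   from u to v; it is legal iff uv is still undirected. *)
Definition orient_legal (n : nat) (h : seq ('I_n * 'I_n)) (a : 'I_n * 'I_n) : bool :=
  [&& a.1 != a.2, a \notin h & (a.2, a.1) \notin h].

Definition digraph_of (n : nat) (h : seq ('I_n * 'I_n)) : {set 'I_n * 'I_n} :=
  [set a | a \in h].

Inductive OB_wins_from (k n : nat) (T : rel 'I_k)
    (sigma : seq ('I_n * 'I_n) -> 'I_n * 'I_n) : seq ('I_n * 'I_n) -> Prop :=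
| OB_end h :
    (forall a, ~~ orient_legal h a) ->
    ~ contains_copy T (digraph_of h) ->
    OB_wins_from T sigma h
| OB_omaker_turn h :
    ~~ odd (size h) -> (exists a, orient_legal h a) ->
    (forall a, orient_legal h a -> OB_wins_from T sigma (rcons h a)) ->
    OB_wins_from T sigma h
| OB_obreaker_turn h :
    odd (size h) -> (exists a, orient_legal h a) ->
    orient_legal h (sigma h) ->
    OB_wins_from T sigma (rcons h (sigma h)) ->
    OB_wins_from T sigma h.

Definition OBreaker_has_winning_strategy (k n : nat) (T : rel 'I_k) : Prop :=
  exists sigma : seq ('I_n * 'I_n) -> 'I_n * 'I_n, OB_wins_from T sigma [::].

From HB Require Import structures.
From mathcomp Require Import all_boot.
Set Implicit Arguments. Unset Strict Implicit. Unset Printing Implicit Defensive.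

(* OBreaker runs a simulated play of the (2:1) game H(T_k,n) in which Breaker
   follows his winning strategy.  When OMaker orients an edge as the arc [a],
   Maker claims [a] together with OBreaker's previous arc (on the first move,
   together with the reverse of [a]); Breaker answers with an arc [x], and
   OBreaker orients the edge of [x] against [x] if it is still undirected,
   and plays any legal arc otherwise.  The invariant [simulates] says that
   every arc claimed in H is already oriented (so Maker's claims are always
   free) and that Maker owns every arc of the orientation except OBreaker's
   last one.  When the orientation game ends, Maker also claims that last arc
   and then owns the whole final digraph; a copy of T_k in it would be a Maker
   win against Breaker's winning strategy.  The argument does not use that
   T_k is a tournament. *)

Lemma extend_to_card (X : finType) (Y F : {set X}) m :
  Y \subset F -> #|Y| <= m <= #|F| ->
  exists A : {set X}, [/\ Y \subset A, A \subset F & #|A| = m].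
Proof.
move=> YF /andP[Ym mF].
have : m - #|Y| <= #|F :\: Y| by rewrite cardsD (setIidPr YF) leq_sub2r.
case/card_geqP=> s [s_uniq s_size sFY].
exists (Y :|: [set x in s]); split; first exact: subsetUl.
  rewrite subUset YF; apply/subsetP=> x; rewrite inE => /sFY.
  by rewrite inE => /andP[].
have disj : [disjoint Y & [set x in s]].
  rewrite -setI_eq0; apply/eqP/setP=> x; rewrite !inE.
  by apply/negP=> /andP[xY /sFY]; rewrite inE xY.
rewrite cardsU (disjoint_setI0 disj) cards0 subn0 cardsE (card_uniqP s_uniq) s_size.
by rewrite subnKC.
Qed.

Section Histories.
Variable X : finType.
Implicit Types (h : seq {set X}) (A Bd : {set X}).

Lemma bigcup_rcons h A (P : pred nat) :
  \bigcup_(i < size (rcons h A) | P i) nth set0 (rcons h A) i =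
  (\bigcup_(i < size h | P i) nth set0 h i) :|: (if P (size h) then A else set0).
Proof.
rewrite size_rcons big_mkcond big_ord_recr /= nth_rcons ltnn eqxx.
rewrite [in RHS]big_mkcond; congr (_ :|: _).
by apply: eq_bigr=> i _; rewrite nth_rcons ltn_ord.
Qed.

Lemma mset_rcons h A :
  mset (rcons h A) = if odd (size h) then mset h else mset h :|: A.
Proof.
by rewrite /mset (bigcup_rcons h A (fun i => ~~ odd i)); case: odd; rewrite /= ?setU0.
Qed.

Lemma bset_rcons h A :
  bset (rcons h A) = if odd (size h) then bset h :|: A else bset h.
Proof. by rewrite /bset (bigcup_rcons h A odd); case: odd; rewrite /= ?setU0. Qed.

Lemma mset_nil : mset [::] = set0 :> {set X}.
Proof. by rewrite /mset big_ord0. Qed.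

Lemma bset_nil : bset [::] = set0 :> {set X}.
Proof. by rewrite /bset big_ord0. Qed.

Lemma in_free Bd h x :
  (x \in free Bd h) = [&& x \in Bd, x \notin mset h & x \notin bset h].
Proof. by rewrite /free !inE negb_or andbC andbA. Qed.

End Histories.

Section BreakerWins.
Variables (X : finType) (a b : nat) (Bd : {set X}) (W : {set X} -> Prop).
Variable sigma : seq {set X} -> {set X}.
Local Notation wins := (MB_breaker_wins_from a b Bd W sigma).
Implicit Types (h : seq {set X}) (A Y : {set X}).

Lemma wins_maker_move h : wins h -> ~~ odd (size h) -> free Bd h != set0 ->
  forall A, A \subset free Bd h -> #|A| = minn a #|free Bd h| -> wins (rcons h A).
Proof.
case=> {}h; first by move=> -> _; rewrite eqxx.
- by move=> _ _ Dnext _ _; exact: Dnext.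
- by move=> ->.
Qed.

Lemma wins_breaker_move h : wins h -> odd (size h) -> free Bd h != set0 ->
  [/\ sigma h \subset free Bd h, #|sigma h| = minn b #|free Bd h|
    & wins (rcons h (sigma h))].
Proof.
case=> {}h; first by move=> -> _; rewrite eqxx.
- by move=> /negPf ->.
- by move=> _ _ sF cF Dnext _ _; split.
Qed.

Lemma wins_maker_move_extending h Y : wins h -> ~~ odd (size h) ->
  free Bd h != set0 -> Y \subset free Bd h -> #|Y| <= a ->
  exists2 A : {set X}, Y \subset A & wins (rcons h A).
Proof.
move=> Dh ev Fnz YF Ya.
have [A [YA AF Ac]] : exists A : {set X}, [/\ Y \subset A, A \subset free Bd h
    & #|A| = minn a #|free Bd h|].
  by apply: extend_to_card; rewrite // leq_min Ya subset_leq_card ?geq_minr.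
by exists A; last exact: wins_maker_move.
Qed.

Lemma wins_no_maker_set h : wins h -> ~ exists2 S, W S & S \subset mset h.
Proof.
elim=> {}h; first by move=> _ H [S WS SM]; apply: H; exists S.
- move=> ev Fnz _ IH [S WS SM].
  have [A [_ AF Ac]] : exists A : {set X}, [/\ set0 \subset A,
      A \subset free Bd h & #|A| = minn a #|free Bd h|].
    by apply: extend_to_card; rewrite ?sub0set // cards0 geq_minr.
  apply: (IH A AF Ac); exists S => //.
  by rewrite mset_rcons (negPf ev) (subset_trans SM) ?subsetUl.
- by move=> od _ _ _ _ IH [S WS SM]; apply: IH; exists S; rewrite // mset_rcons od.
Qed.

End BreakerWins.

Section Orientation.
Variable n : nat.
Local Notation arc := ('I_n * 'I_n)%type.
Implicit Types (h : seq arc) (x y z : arc).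

Definition rev_arc x : arc := (x.2, x.1).

Lemma rev_arcK : involutive rev_arc. Proof. by case. Qed.

Definition oriented h : {set arc} := [set x | (x \in h) || (rev_arc x \in h)].

Lemma oriented_rcons h y : oriented h \subset oriented (rcons h y).
Proof.
by apply/subsetP=> x; rewrite !inE !mem_rcons !inE => /orP[]->; rewrite ?orbT.
Qed.

Lemma oriented_last h y :
  (y \in oriented (rcons h y)) && (rev_arc y \in oriented (rcons h y)).
Proof. by rewrite !inE !mem_rcons !inE rev_arcK eqxx !orbT. Qed.

Lemma legal_board h x : orient_legal h x -> x \in Hboard n.
Proof. by case/and3P=> xx _ _; rewrite inE. Qed.

Lemma legal_not_oriented h x : orient_legal h x -> x \notin oriented h.
Proof. by case/and3P=> _ xh rxh; rewrite inE negb_or xh. Qed.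

Lemma illegal_rev_oriented h x :
  x \in Hboard n -> ~~ orient_legal h (rev_arc x) -> x \in oriented h.
Proof.
case: x => x1 x2; rewrite !inE /orient_legal /= eq_sym => -> /=.
by rewrite negb_and !negbK orbC.
Qed.

Lemma legal_rcons h x y : orient_legal (rcons h x) y -> orient_legal h y && (y != x).
Proof.
case/and3P=> yy; rewrite !mem_rcons !inE !negb_or => /andP[yx yh] /andP[_ ryh].
by rewrite /orient_legal yy yh ryh yx.
Qed.

Lemma legal_card_rcons h x : orient_legal h x ->
  #|[set y | orient_legal (rcons h x) y]| < #|[set y | orient_legal h y]|.
Proof.
move=> lx; apply/proper_card/properP; split.
  by apply/subsetP=> y; rewrite !inE => /legal_rcons/andP[].
by exists x; rewrite !inE //; apply/negP=> /legal_rcons; rewrite eqxx andbF.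
Qed.

End Orientation.

Section Simulation.
Variables (k n : nat) (T : rel 'I_k).
Local Notation arc := ('I_n * 'I_n)%type.
Local Notation board := (Hboard n).
Variable sigma : seq {set arc} -> {set arc}.
Local Notation wins := (MB_breaker_wins_from 2 1 board (@HWin k n T) sigma).
Variable d : arc.
Implicit Types (ho : seq arc) (hm : seq {set arc}) (x y : arc).

Definition maker_claim ho x : {set arc} :=
  if ho is [::] then [set x; rev_arc x] else [set x; last x ho].

Definition sim_step (st : seq {set arc} * seq arc) x :=
  if odd (size st.2) then (st.1, rcons st.2 x)
  else let hm := rcons st.1 (maker_claim st.2 x) in (rcons hm (sigma hm), rcons st.2 x).

Definition sim_state ho := foldl sim_step ([::], [::]) ho.
Definition sim ho := (sim_state ho).1.

Lemma sim_state_record ho : (sim_state ho).2 = ho.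
Proof.
elim/last_ind: ho => [//|ho x IH].
by rewrite /sim_state foldl_rcons /sim_step -/(sim_state ho) IH; case: odd.
Qed.

Lemma sim_rcons ho x : sim (rcons ho x) =
  if odd (size ho) then sim ho
  else rcons (rcons (sim ho) (maker_claim ho x)) (sigma (rcons (sim ho) (maker_claim ho x))).
Proof.
by rewrite /sim /sim_state foldl_rcons /sim_step -/(sim_state ho) sim_state_record; case: odd.
Qed.

(* OBreaker answers Breaker's choice [x] by orienting its edge against [x]
   when possible; otherwise the edge of [x] is already oriented and any
   legal arc will do. *)
Definition reply ho x : arc :=
  if orient_legal ho (rev_arc x) then rev_arc x
  else odflt d [pick y | orient_legal ho y].

Definition obreaker_strategy ho : arc :=
  reply ho (odflt d [pick x in last set0 (sim ho)]).

Lemma reply_spec ho x y : x \in board -> orient_legal ho y ->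
  [/\ orient_legal ho (reply ho x), x \in oriented (rcons ho (reply ho x))
    & reply ho x != x].
Proof.
move=> xB ly; rewrite /reply; case: ifP => [lrx | /negbT /(illegal_rev_oriented xB) xo].
  split=> //; first by case/andP: (oriented_last ho (rev_arc x)); rewrite rev_arcK.
  by apply/eqP=> ex; move: xB; rewrite inE -{1}ex eqxx.
case: pickP => [z lz | /(_ y)]; last by rewrite ly.
split=> //=; first exact: (subsetP (oriented_rcons _ _)).
by apply/eqP=> ez; move: (legal_not_oriented lz); rewrite ez xo.
Qed.

Lemma no_copy_of_owned hm ho : wins hm -> {subset ho <= mset hm} ->
  ~ contains_copy T (digraph_of ho).
Proof.
move=> Dhm sub [f [f_inj Tf]]; apply: (wins_no_maker_set Dhm).
exists (copy_arcs T f); first by exists f.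
apply/subsetP=> z /imsetP[p]; rewrite inE => Tp ->.
by apply: sub; move: (Tf _ _ Tp); rewrite inE.
Qed.

Lemma legal_free ho hm x : mset hm \subset oriented ho ->
  bset hm \subset oriented ho -> orient_legal ho x -> x \in free board hm.
Proof.
move=> Mo Bo lx; rewrite in_free (legal_board lx) /=.
have xo := legal_not_oriented lx.
by rewrite (contraNN (subsetP Mo x) xo) (contraNN (subsetP Bo x) xo).
Qed.

Definition simulates ho hm : Prop :=
  [/\ size hm = size ho, mset hm \subset oriented ho, bset hm \subset oriented ho,
      {subset ho <= board} &
      forall ho' y, ho = rcons ho' y ->
        [/\ {subset ho' <= mset hm}, y \notin mset hm & y \notin bset hm]].

Lemma simulates_nil : simulates [::] (sim [::]).
Proof.
split; rewrite /sim //= ?mset_nil ?bset_nil ?sub0set //.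
by move=> ho' y /esym/eqP; rewrite -size_eq0 size_rcons.
Qed.

Lemma maker_claim_spec ho hm x : simulates ho hm -> orient_legal ho x ->
  [/\ maker_claim ho x \subset free board hm, #|maker_claim ho x| = 2,
      maker_claim ho x \subset oriented (rcons ho x)
    & {subset rcons ho x <= mset hm :|: maker_claim ho x}].
Proof.
move=> [_ Mo Bo hoB pending] lx.
have xF := legal_free Mo Bo lx; have xB := legal_board lx.
have /andP[xo rxo] := oriented_last ho x.
have [ho0 | [ho' [y eho]]] : ho = [::] \/ exists ho' y, ho = rcons ho' y.
  by case/lastP: (ho) => [|ho' y]; [left | right; exists ho', y].
  have M0 : mset hm = set0.
    by apply/eqP; rewrite -subset0 (subset_trans Mo) // ho0; apply/subsetP=> z; rewrite inE.
  have B0 : bset hm = set0.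
    by apply/eqP; rewrite -subset0 (subset_trans Bo) // ho0; apply/subsetP=> z; rewrite inE.
  have xrx : x != rev_arc x by apply: (contraTneq _ xB) => ex; rewrite inE {2}ex eqxx.
  rewrite ho0 /maker_claim in xo rxo *; split; rewrite ?cards2 ?xrx //.
  - rewrite subUset !sub1set xF in_free M0 B0 !inE /= andbT eq_sym.
    by move: xB; rewrite inE.
  - by rewrite subUset !sub1set xo.
  - by move=> z; rewrite inE => /eqP->; rewrite !inE eqxx orbT.
have [ho'M yM yB] := pending ho' y eho.
have yho : y \in ho by rewrite eho mem_rcons inE eqxx.
have xy : x != y by apply: (contraNneq _ (legal_not_oriented lx)) => ->; rewrite inE yho.
have -> : maker_claim ho x = [set x; y].
  rewrite /maker_claim eho; case E: (rcons ho' y) => [|z s]; last by rewrite -E last_rcons.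
  by move/eqP: E; rewrite -size_eq0 size_rcons.
split; rewrite ?cards2 ?xy //.
- by rewrite subUset !sub1set xF in_free hoB ?yM.
- by rewrite subUset !sub1set xo (subsetP (oriented_rcons _ _)) // inE yho.
- move=> z; rewrite eho !(mem_rcons, inE) => /or3P[/eqP-> | /eqP-> | /ho'M zM];
    by rewrite ?eqxx ?orbT ?zM.
Qed.

Lemma simulates_round ho hm a b x : ~~ odd (size ho) -> simulates ho hm ->
  orient_legal ho a -> orient_legal (rcons ho a) b ->
  x \in oriented (rcons (rcons ho a) b) -> b != x ->
  simulates (rcons (rcons ho a) b) (rcons (rcons hm (maker_claim ho a)) [set x]).
Proof.
move=> ev Hsim la lb xo bx.
have [_ _ AO Acov] := maker_claim_spec Hsim la.
have [sz Mo Bo hoB _] := Hsim.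
have ev' : ~~ odd (size hm) by rewrite sz.
have M1 : mset (rcons (rcons hm (maker_claim ho a)) [set x]) = mset hm :|: maker_claim ho a.
  by rewrite !mset_rcons size_rcons /= (negPf ev').
have B1 : bset (rcons (rcons hm (maker_claim ho a)) [set x]) = bset hm :|: [set x].
  by rewrite !bset_rcons size_rcons /= (negPf ev').
have MO : mset hm :|: maker_claim ho a \subset oriented (rcons ho a).
  by rewrite subUset AO (subset_trans Mo) ?oriented_rcons.
have BO : bset hm \subset oriented (rcons ho a) := subset_trans Bo (oriented_rcons _ _).
split.
- by rewrite !size_rcons sz.
- by rewrite M1 (subset_trans MO) ?oriented_rcons.
- by rewrite B1 subUset sub1set xo (subset_trans BO) ?oriented_rcons.
- move=> z; rewrite !(mem_rcons, in_cons) => /or3P[/eqP-> | /eqP-> | /hoB //].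
    exact: legal_board lb.
  exact: legal_board la.
- move=> ho'' b'' /rcons_inj[<- <-]; rewrite M1 B1; split.
  + exact: Acov.
  + exact: contraNN (subsetP MO b) (legal_not_oriented lb).
  + rewrite in_setU in_set1 negb_or bx andbT.
    exact: contraNN (subsetP BO b) (legal_not_oriented lb).
Qed.

(* When the orientation game ends after OBreaker's move, Maker's final claim
   of OBreaker's last arc gives her the whole final digraph; so the digraph
   contains no copy of [T]. *)
Lemma no_copy_at_end ho hm : ~~ odd (size ho) -> simulates ho hm -> wins hm ->
  ~ contains_copy T (digraph_of ho).
Proof.
case/lastP: ho => [|ho' y] ev [sz _ _ hoB pending] Dhm.
  by apply: (no_copy_of_owned Dhm) => z; rewrite in_nil.
have [ho'M yM yB] := pending ho' y erefl.
have yF : y \in free board hm by rewrite in_free hoB ?yM // mem_rcons mem_head.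
have ev' : ~~ odd (size hm) by rewrite sz.
have Fnz : free board hm != set0 by apply/set0Pn; exists y.
have yF' : [set y] \subset free board hm by rewrite sub1set.
have y2 : #|[set y]| <= 2 by rewrite cards1.
have [A yA DA] := wins_maker_move_extending Dhm ev' Fnz yF' y2.
apply: no_copy_of_owned DA _ => z; rewrite mset_rcons (negPf ev') mem_rcons in_cons.
case/orP=> [/eqP-> | /ho'M zM]; rewrite in_setU ?zM //.
by rewrite (subsetP yA) ?orbT ?set11.
Qed.

Lemma maker_answer ho hm a : ~~ odd (size ho) -> simulates ho hm -> wins hm ->
  orient_legal ho a -> wins (rcons hm (maker_claim ho a)).
Proof.
move=> ev Hsim Dhm la; have [AF Ac _ _] := maker_claim_spec Hsim la.
have [sz Mo Bo _ _] := Hsim.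
have aF := legal_free Mo Bo la.
apply: wins_maker_move; rewrite ?sz //; first by apply/set0Pn; exists a.
by rewrite Ac; apply/esym/minn_idPl; rewrite -Ac subset_leq_card.
Qed.

Lemma breaker_answer ho a z : ~~ odd (size ho) -> simulates ho (sim ho) ->
  wins (sim ho) -> orient_legal ho a -> orient_legal (rcons ho a) z ->
  exists x, [/\ x \in board,
    sim (rcons ho a) = rcons (rcons (sim ho) (maker_claim ho a)) [set x]
    & wins (sim (rcons ho a))].
Proof.
move=> ev Hsim Dh la lz.
set hm1 := rcons (sim ho) (maker_claim ho a).
have D1 : wins hm1 := maker_answer ev Hsim Dh la.
have [sz Mo Bo _ _] := Hsim; have [_ _ AO _] := maker_claim_spec Hsim la.
have od1 : odd (size hm1) by rewrite size_rcons sz /= ev.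
have zF : z \in free board hm1.
  apply: legal_free lz; rewrite ?mset_rcons ?bset_rcons sz (negPf ev).
    by rewrite subUset AO (subset_trans Mo) ?oriented_rcons.
  exact: subset_trans Bo (oriented_rcons _ _).
have Fnz : free board hm1 != set0 by apply/set0Pn; exists z.
have [xF xc D2] := wins_breaker_move D1 od1 Fnz.
have /cards1P[x Ex] : #|sigma hm1| == 1.
  by rewrite xc; apply/eqP/minn_idPl; rewrite card_gt0; apply/set0Pn; exists z.
have Esim : sim (rcons ho a) = rcons hm1 [set x] by rewrite sim_rcons (negPf ev) -Ex.
exists x; rewrite Esim; split=> //; last by rewrite -Ex.
by move: (subsetP xF x); rewrite Ex set11 in_free => /(_ isT)/and3P[].
Qed.

Local Notation legal_moves ho := #|[set y | orient_legal ho y]|.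

Lemma obreaker_wins_round ho a : ~~ odd (size ho) -> simulates ho (sim ho) ->
  wins (sim ho) -> orient_legal ho a ->
  (forall ho2, legal_moves ho2 < legal_moves ho -> ~~ odd (size ho2) ->
     simulates ho2 (sim ho2) -> wins (sim ho2) ->
     OB_wins_from T obreaker_strategy ho2) ->
  OB_wins_from T obreaker_strategy (rcons ho a).
Proof.
move=> ev Hsim Dh la IH.
have [z lz | stuck] := pickP (orient_legal (rcons ho a)); last first.
  apply: OB_end=> [y|]; first by rewrite stuck.
  have [_ _ _ Acov] := maker_claim_spec Hsim la.
  apply: no_copy_of_owned (maker_answer ev Hsim Dh la) _ => y /Acov.
  by have [sz _ _ _ _] := Hsim; rewrite mset_rcons sz (negPf ev).
have [x [xB Esim D2]] := breaker_answer ev Hsim Dh la lz.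
have Estrat : obreaker_strategy (rcons ho a) = reply (rcons ho a) x.
  by rewrite /obreaker_strategy Esim last_rcons pick_set1.
have [lb xo bx] := reply_spec xB lz; rewrite -Estrat in lb xo bx.
have od : odd (size (rcons ho a)) by rewrite size_rcons /= ev.
apply: OB_obreaker_turn (lb) _ => //; first by exists z.
have Esim2 : sim (rcons (rcons ho a) (obreaker_strategy (rcons ho a))) = sim (rcons ho a).
  by rewrite sim_rcons od.
apply: IH; rewrite ?Esim2 //.
- exact: ltn_trans (legal_card_rcons lb) (legal_card_rcons la).
- by rewrite size_rcons /= od.
- by rewrite Esim; apply: simulates_round.
Qed.

Lemma obreaker_wins_from ho : ~~ odd (size ho) -> simulates ho (sim ho) ->
  wins (sim ho) -> OB_wins_from T obreaker_strategy ho.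
Proof.
move: {2}(legal_moves ho) (leqnn (legal_moves ho)) => m.
elim: m ho => [|m IH] ho Hm ev Hsim Dh;
  have [a la | stuck] := pickP (orient_legal ho).
- by move: Hm; rewrite leqn0 => /eqP/cards0_eq/setP/(_ a); rewrite !inE la.
- by apply: OB_end=> [y|]; [rewrite stuck | exact: no_copy_at_end ev Hsim Dh].
- apply: OB_omaker_turn=> //; first by exists a.
  move=> b lb; apply: obreaker_wins_round=> // ho2 lt2; apply: IH.
  by rewrite -ltnS (leq_trans lt2).
- by apply: OB_end=> [y|]; [rewrite stuck | exact: no_copy_at_end ev Hsim Dh].
Qed.

End Simulation.

Unset Implicit Arguments.
Set Strict Implicit.

Theorem mainTheorem7 (k : nat) (T : rel 'I_k) (n : nat) :
  tournament T -> 0 < n ->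
  MB_breaker_has_winning_strategy 2 1 (Hboard n) (@HWin k n T) ->
  @OBreaker_has_winning_strategy k n T.
Proof.
move=> _ n_gt0 [sigma Dsigma].
exists (obreaker_strategy sigma (Ordinal n_gt0, Ordinal n_gt0)).
by apply: obreaker_wins_from => //; apply: simulates_nil.
Qed.
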